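(* (1) Every nonempty compact metric space $X$ admits a peripheral extension. (2) Any two peripheral extensions of a nonempty compact metric space $X$ are homeomorphic via a homeomorphism that is the identity on $X$. (3) Given a peripheral extension $K$ of $X$, the group of homeomorphisms of $K$ that are the identity on $X$ acts transitively on the set $P$ of peripheral points of $K$.
   Context: Let $P$ be a countably infinite discrete space. A peripheral extension of a compact metric space $X$ is a compact metric space $K$ containing $P$ as an open dense subspace such that $K\setminus P$ is homeomorphic to $X$ (identified with $X$); the points of $P$ are the peripheral points. *)

From HB Require Import structures.
From mathcomp Require Import all_boot all_order all_algebra.
From mathcomp Require Import all_classical all_reals all_analysis.
Set Implicit Arguments. Unset Strict Implicit. Unset Printing Implicit Defensive.
Import Order.TTheory GRing.Theory Num.Theory.
Local Open Scope classical_set_scope.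

Definition homeomorphism {S T : topologicalType} (h : S -> T) : Prop :=
  continuous h /\ exists g : T -> S, cancel h g /\ cancel g h /\ continuous g.

Definition embedding {S T : topologicalType} (e : S -> T) : Prop :=
  continuous e /\ injective e /\
  forall U : set S, open U -> exists V : set T, open V /\ e @` U = V `&` range e.

Definition peripheral_extension {R : realType} (X K : metricType R) (e : X -> K) : Prop :=
  let P := ~` range e in
  compact [set: K] /\ embedding e /\ open P /\ closure P = [set: K] /\
  countable P /\ infinite_set P /\ (forall p, P p -> isolated P p).

(* Peripheral points are isolated, so there are only finitely many of them at
   distance at least gam > 0 from X (they form a compact discrete set); and X is
   the set of accumulation points of the peripheral points.

   Existence: pick a dense sequence (y k) in X and put a peripheral point (k, m)
   above y k at height 1 / (k + m + 1); two distinct points are at distance the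
   distance of their feet plus their heights.  Only finitely many points have
   height >= eps, which gives compactness.

   Uniqueness: a back-and-forth argument matches the countable sets of
   peripheral points so that matched points p, q have nearest points r1 p,
   r2 q in X which are closer than the larger of d(p, X), d(q, X).  Glued with
   the identity of X this bijection is continuous at X, because only finitely
   many peripheral points are far from X.

   Transitivity: the transposition of two isolated points is a homeomorphism. *)

From HB Require Import structures.
From mathcomp Require Import all_boot all_order all_algebra.
From mathcomp Require Import all_classical all_reals all_analysis.
From mathcomp Require Import lra zify.

Set Implicit Arguments. Unset Strict Implicit. Unset Printing Implicit Defensive.
Import Order.TTheory GRing.Theory Num.Theory numFieldNormedType.Exports.
Local Open Scope classical_set_scope.
Local Open Scope ring_scope.

Section MetricFacts.
Context {R : realType}.
Implicit Types (V W : metricType R).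

Lemma nbhs_mdistP V (x : V) (A : set V) :
  nbhs x A <-> exists2 e : R, 0 < e & forall y, mdist x y < e -> A y.
Proof.
rewrite -metricType_numDomainType.filter_from_mdist_nbhs.
by split=> -[e e0 eA]; exists e.
Qed.

Lemma open_mdistP V (A : set V) :
  open A <-> forall x, A x -> exists2 e : R, 0 < e & forall y, mdist x y < e -> A y.
Proof. by rewrite openE; split=> Aint x /Aint /nbhs_mdistP. Qed.

Lemma continuous_mdistP V W (f : V -> W) : continuous f <->
  forall x (e : R), 0 < e -> exists2 d : R, 0 < d &
    forall y, mdist x y < d -> mdist (f x) (f y) < e.
Proof.
split=> [fc x e e0|fc x A /nbhs_mdistP [e e0 eA]].
  have /fc /nbhs_mdistP [d d0 dball] : nbhs (f x) [set z | mdist (f x) z < e].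
    by apply/nbhs_mdistP; exists e.
  by exists d.
by apply/nbhs_mdistP; have [d d0 dball] := fc x e e0; exists d => // y /dball /eA.
Qed.

Lemma open_mdist_ball V (x : V) (a : R) : open [set z | mdist x z < a].
Proof.
apply/open_mdistP => z /= xz; exists (a - mdist x z); first by rewrite subr_gt0.
by move=> w zw; have := metric_triangle x z w; lra.
Qed.

Lemma mdist_continuous V (p : V) : continuous (mdist p : V -> R).
Proof.
move=> x; apply/cvgrPdist_lt => e e0; apply/nbhs_mdistP; exists e => // y xy.
have := metric_triangle p x y; have := metric_triangle p y x.
rewrite (metric_sym y x) => pyx pxy.
by rewrite distrC; apply: le_lt_trans xy; rewrite ler_norml; apply/andP; split; lra.
Qed.

Lemma finite_set_mdist_avoid V (F : set V) (x : V) : finite_set F -> ~ F x ->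
  exists2 r : R, 0 < r & forall y, mdist x y < r -> ~ F y.
Proof.
move=> /finite_seqP [s ->] {F}; elim: s => [|a s IH] /= xs.
  by exists 1 => // y _; rewrite in_nil.
move: xs => /negP; rewrite in_cons negb_or => /andP [xa /negP /IH [r r0 rs]].
exists (Num.min r (mdist x a)); first by rewrite lt_min r0 mdist_gt0.
move=> y; rewrite lt_min => /andP [yr ya] /=; rewrite in_cons => /orP [/eqP ya'|].
  by move: ya; rewrite ya' ltxx.
exact: rs.
Qed.

Definition isolated_point V (p : V) := exists2 r : R, 0 < r & forall y, mdist p y < r -> y = p.

End MetricFacts.

Definition swap (T : eqType) (p q y : T) := if y == p then q else if y == q then p else y.

Lemma swapK (T : eqType) (p q : T) : involutive (swap p q).
Proof.
move=> y; rewrite /swap; case: (eqVneq y p) => [->|yp].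
  by rewrite eqxx; case: (eqVneq q p) => [->|]; rewrite ?eqxx.
case: (eqVneq y q) => [->|yq]; first by rewrite eqxx.
by rewrite (negbTE yp) (negbTE yq).
Qed.

Lemma swap_other (T : eqType) (p q y : T) : y != p -> y != q -> swap p q y = y.
Proof. by rewrite /swap => /negbTE -> /negbTE ->. Qed.

Lemma swapl (T : eqType) (p q : T) : swap p q p = q.
Proof. by rewrite /swap eqxx. Qed.

Section Swap.
Context {R : realType} (V : metricType R) (p q : V).
Hypotheses (p_isolated : isolated_point p) (q_isolated : isolated_point q).

Lemma swap_continuous : continuous (swap p q).
Proof.
move: p_isolated q_isolated => [rp rp0 Hp] [rq rq0 Hq]; apply/continuous_mdistP => x e e0.
case: (eqVneq x p) => [->|xp]; first by exists rp => // y /Hp ->; rewrite mdistxx.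
case: (eqVneq x q) => [->|xq]; first by exists rq => // y /Hq ->; rewrite mdistxx.
exists (Num.min e (Num.min (mdist x p) (mdist x q))).
  by rewrite !lt_min e0 !mdist_gt0 xp xq.
move=> y; rewrite !lt_min => /andP [ye /andP [yp yq]].
have [yp' yq'] : y != p /\ y != q.
  by split; apply/eqP => yE; [move: yp|move: yq]; rewrite yE ltxx.
by rewrite !swap_other.
Qed.

Lemma swap_homeomorphism : homeomorphism (swap p q).
Proof.
split; first exact: swap_continuous.
by exists (swap p q); split; [exact: swapK|split; [exact: swapK|exact: swap_continuous]].
Qed.

End Swap.

(* [compact_cover] is only stated for pointed spaces; a point of a nonempty [A]
   makes [T] one. *)
Definition pointed_at (T : topologicalType) (x : T) : Type := T.
HB.instance Definition _ (T : topologicalType) (x : T) := Topological.on (pointed_at x).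
HB.instance Definition _ (T : topologicalType) (x : T) := isPointed.Build (pointed_at x) x.

Lemma compact_cover_compact (T : topologicalType) (A : set T) :
  compact A -> cover_compact A.
Proof.
case: (eqVneq A set0) => [-> _|/set0P [x _] cA].
  by move=> I D f _ _; exists finmap.fset0.
by have : @compact (pointed_at x) A by []; rewrite compact_cover.
Qed.

Lemma compact_isolated_finite (T : topologicalType) (A : set T) :
  compact A -> (forall x, A x -> open [set x]) -> finite_set A.
Proof.
move=> /compact_cover_compact cA A1.
have [D _ AD] := cA T A (fun x => [set x]) A1 (fun x Ax => ex_intro2 _ _ x Ax erefl).
by apply: (finite_subfset D) => x /AD [y /= yD ->].
Qed.

Lemma countable_enum (T : Type) (A : set T) : countable A -> A !=set0 ->
  exists en : nat -> T, A `<=` range en.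
Proof.
move=> /countable_injP [f finj] [a0 Aa0].
have /choice [en enP] : forall n : nat, exists a, (exists2 b, A b & f b = n) -> A a /\ f a = n.
  move=> n; have [[b Ab fb]|nb] := pselect (exists2 b, A b & f b = n); first by exists b.
  by exists a0 => /nb.
exists en => a Aa; exists (f a) => //.
have [Aen fen] := enP (f a) (ex_intro2 _ _ a Aa erefl).
by apply: finj; rewrite ?inE.
Qed.

Lemma glue_off_range (T U V : Type) (e : T -> U) (g : T -> V) (f : U -> V) : injective e ->
  exists h : U -> V, (forall x, h (e x) = g x) /\ (forall y, ~ range e y -> h y = f y).
Proof.
move=> einj; have /choice [h hP] : forall y, exists z : V,
    (forall x, y = e x -> z = g x) /\ (~ range e y -> z = f y).
  move=> y; have [[x _ <-]|ny] := pselect (range e y).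
    by exists (g x); split => // x' /einj ->.
  by exists (f y); split => // x yx; exfalso; apply: ny; exists x.
by exists h; split=> [x|y]; [apply: (hP _).1|apply: (hP _).2].
Qed.

Section Embedding.
Context {R : realType} (X K : metricType R).
Implicit Types e : X -> K.

Lemma embedding_mdist_inv e : embedding e -> forall x (a : R), 0 < a ->
  exists2 b : R, 0 < b & forall z, mdist (e x) (e z) < b -> mdist x z < a.
Proof.
move=> [_ [einj eopen]] x a a0.
have [V [oV eV]] := eopen _ (open_mdist_ball x a).
have [Vex _] : (V `&` range e) (e x) by rewrite -eV; exists x => //=; rewrite mdistxx.
have [b b0 bV] := (proj1 (open_mdistP _) oV) _ Vex.
exists b => // z /bV Vez.
have : (V `&` range e) (e z) by split => //; exists z.
by rewrite -eV => -[u /= ua /einj <-].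
Qed.

Lemma exists_nearest_point e : continuous e -> compact [set: X] -> [set: X] !=set0 ->
  exists r : K -> X, forall p z, mdist p (e (r p)) <= mdist p (e z).
Proof.
move=> ec cX X0.
suff /choice [r rP] : forall p, exists c, forall z, mdist p (e c) <= mdist p (e z).
  by exists r.
move=> p; have dc : continuous (mdist p \o e : X -> R).
  by move=> x; apply: continuous_comp; [exact: ec|exact: mdist_continuous].
have [c _ cmin] := compact_EVT_min X0 cX (continuous_subspaceT dc).
by exists c => z; apply: cmin; rewrite inE.
Qed.

Lemma mdist_nearest_le e (r : K -> X) :
  (forall p z, mdist p (e (r p)) <= mdist p (e z)) ->
  forall x p, mdist (e x) (e (r p)) <= mdist (e x) p *+ 2.
Proof.
move=> rP x p; have := rP p x; have := metric_triangle (e x) p (e (r p)).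
by rewrite (metric_sym p (e x)) mulr2n; lra.
Qed.

End Embedding.

Section PeripheralExtension.
Context {R : realType} (X K : metricType R) (e : X -> K).
Hypothesis pe : peripheral_extension e.

Lemma peripheral_embedding : embedding e.
Proof. by case: pe => _ []. Qed.

Lemma peripheral_isolated p : ~ range e p -> isolated_point p.
Proof.
case: pe => _ [_ [oP [_ [_ [_ iso]]]]] Pp.
have [r1 r10 r1P] := (proj1 (open_mdistP _) oP) p Pp.
have [_ [V /nbhs_mdistP [r2 r20 r2V] VP]] := iso p Pp.
exists (Num.min r1 r2); first by rewrite lt_min r10 r20.
move=> y; rewrite lt_min => /andP [y1 y2].
have : (V `&` ~` range e) y by split; [apply: r2V | apply: r1P].
by rewrite VP.
Qed.

Lemma peripheral_far_finite (gam : R) : 0 < gam ->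
  finite_set [set y | forall z, gam <= mdist y (e z)].
Proof.
move=> gam0; set C := [set y | _].
have CP : C `<=` ~` range e by move=> y Cy [z _ yz]; have := Cy z; rewrite yz mdistxx; lra.
apply: compact_isolated_finite.
  apply: (@subclosed_compact _ _ [set: K]) => //; last by case: pe.
  rewrite -openC; apply/open_mdistP => y /= /existsNP [z /negP]; rewrite -ltNge => yz.
  exists (gam - mdist y (e z)); first by rewrite subr_gt0.
  move=> w yw /(_ z); have := metric_triangle w y (e z).
  by rewrite (metric_sym w y); lra.
move=> y /CP /peripheral_isolated [r r0 rP]; apply/open_mdistP => _ ->.
by exists r.
Qed.

Lemma peripheral_dense_avoid x (eps : R) (F : set K) : 0 < eps -> finite_set F ->
  exists q, [/\ ~ range e q, ~ F q & mdist (e x) q < eps].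
Proof.
move=> eps0 /(finite_setD [set e x]) /finite_set_mdist_avoid.
case/(_ (e x)) => [[_ []] //|r r0 rF].
case: pe => _ [_ [_ [Pdense _]]].
have : closure (~` range e) (e x) by rewrite Pdense.
move=> /(_ [set q | mdist (e x) q < Num.min eps r]) [].
  by apply/nbhs_mdistP; exists (Num.min eps r) => //; rewrite lt_min eps0 r0.
move=> q [Pq]; rewrite /= lt_min => /andP [qe qr].
exists q; split => // Fq; apply: rF qr _; split => // qx.
by apply: Pq; exists x; rewrite // qx.
Qed.

Lemma peripheral_enum : exists en : nat -> K, ~` range e `<=` range en.
Proof.
case: pe => _ [_ [_ [_ [cP [iP _]]]]].
exact: countable_enum cP (infinite_setN0 iP).
Qed.

End PeripheralExtension.

Section BackAndForth.
Variables (A B : eqType) (PA : set A) (PB : set B) (G : A -> B -> Prop).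
Variables (enA : nat -> A) (enB : nat -> B) (forth : A -> seq B -> B) (back : B -> seq A -> A).
Hypothesis enA_onto : PA `<=` range enA.
Hypothesis enB_onto : PB `<=` range enB.
Hypothesis forthP :
  forall a s, PA a -> [/\ PB (forth a s), forth a s \notin s & G a (forth a s)].
Hypothesis backP :
  forall b s, PB b -> [/\ PA (back b s), back b s \notin s & G (back b s) b].
Implicit Types (s : seq (A * B)) (n : nat).

Definition partial_matching s := [/\ uniq (map fst s), uniq (map snd s) &
  forall a b, (a, b) \in s -> [/\ PA a, PB b & G a b]].

Lemma partial_matching_fun s a b b' : partial_matching s ->
  (a, b) \in s -> (a, b') \in s -> b = b'.
Proof.
case=> + _ _; elim: s => [|[x y] s IH] //=; rewrite !in_cons => /andP [xs us].
case/orP => [/eqP [ax yb]|abs]; case/orP => [/eqP [ax' yb']|abs'].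
- by rewrite yb yb'.
- by move: xs => /negP []; apply/mapP; exists (a, b'); rewrite -?ax.
- by move: xs => /negP []; apply/mapP; exists (a, b); rewrite -?ax'.
- exact: IH.
Qed.

Lemma partial_matching_inj s a a' b : partial_matching s ->
  (a, b) \in s -> (a', b) \in s -> a = a'.
Proof.
case=> _ + _; elim: s => [|[x y] s IH] //=; rewrite !in_cons => /andP [ys us].
case/orP => [/eqP [ax yb]|abs]; case/orP => [/eqP [ax' yb']|abs'].
- by rewrite ax ax'.
- by move: ys => /negP []; apply/mapP; exists (a', b); rewrite -?yb.
- by move: ys => /negP []; apply/mapP; exists (a, b); rewrite -?yb'.
- exact: IH.
Qed.

Definition extend_forth n s :=
  if `[< PA (enA n) >] && (enA n \notin map fst s)
  then (enA n, forth (enA n) (map snd s)) :: s else s.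

Definition extend_back n s :=
  if `[< PB (enB n) >] && (enB n \notin map snd s)
  then (back (enB n) (map fst s), enB n) :: s else s.

Fixpoint matching_seq n :=
  if n is m.+1 then extend_back m (extend_forth m (matching_seq m)) else [::].

Lemma extend_forth_matching n s : partial_matching s -> partial_matching (extend_forth n s).
Proof.
move=> [u1 u2 sP]; rewrite /extend_forth.
case: ifP => [/andP [/asboolP Pa na]|_]; last by split.
have [Pb nb Gab] := forthP (map snd s) Pa.
split => /=; [by rewrite na|by rewrite nb|move=> a b].
by rewrite in_cons => /orP [/eqP [-> ->]|/sP].
Qed.

Lemma extend_back_matching n s : partial_matching s -> partial_matching (extend_back n s).
Proof.
move=> [u1 u2 sP]; rewrite /extend_back.
case: ifP => [/andP [/asboolP Pb nb]|_]; last by split.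
have [Pa na Gab] := backP (map fst s) Pb.
split => /=; [by rewrite na|by rewrite nb|move=> a b].
by rewrite in_cons => /orP [/eqP [-> ->]|/sP].
Qed.

Lemma extend_forth_sub n s : {subset s <= extend_forth n s}.
Proof. by move=> x xs; rewrite /extend_forth; case: ifP; rewrite ?in_cons ?xs ?orbT. Qed.

Lemma extend_back_sub n s : {subset s <= extend_back n s}.
Proof. by move=> x xs; rewrite /extend_back; case: ifP; rewrite ?in_cons ?xs ?orbT. Qed.

Lemma extend_forth_fst n s : PA (enA n) -> enA n \in map fst (extend_forth n s).
Proof.
move=> Pa; rewrite /extend_forth; case: ifPn => [_|]; first by rewrite in_cons eqxx.
by rewrite negb_and => /orP [/asboolPn //|]; rewrite negbK.
Qed.

Lemma extend_back_snd n s : PB (enB n) -> enB n \in map snd (extend_back n s).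
Proof.
move=> Pb; rewrite /extend_back; case: ifPn => [_|]; first by rewrite in_cons eqxx.
by rewrite negb_and => /orP [/asboolPn //|]; rewrite negbK.
Qed.

Lemma matching_seqP n : partial_matching (matching_seq n).
Proof.
elim: n => [|n IH] /=; first by split.
exact/extend_back_matching/extend_forth_matching.
Qed.

Lemma matching_seq_mono n m : (n <= m)%N -> {subset matching_seq n <= matching_seq m}.
Proof.
move=> /subnK <-; elim: (m - n)%N => [|k IH] // x /IH xk.
by rewrite addSn /=; apply/extend_back_sub/extend_forth_sub.
Qed.

Definition matched a b := exists n, (a, b) \in matching_seq n.

Lemma matchedP a b : matched a b -> [/\ PA a, PB b & G a b].
Proof. by move=> [n abn]; case: (matching_seqP n) => _ _ /(_ _ _ abn). Qed.

Lemma matched_fun a b b' : matched a b -> matched a b' -> b = b'.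
Proof.
move=> [n abn] [m abm]; apply: (partial_matching_fun (matching_seqP (maxn n m))).
  by apply: matching_seq_mono abn; rewrite leq_maxl.
by apply: matching_seq_mono abm; rewrite leq_maxr.
Qed.

Lemma matched_inj a a' b : matched a b -> matched a' b -> a = a'.
Proof.
move=> [n abn] [m abm]; apply: (partial_matching_inj (matching_seqP (maxn n m))).
  by apply: matching_seq_mono abn; rewrite leq_maxl.
by apply: matching_seq_mono abm; rewrite leq_maxr.
Qed.

Lemma matched_total a : PA a -> exists b, matched a b.
Proof.
move=> Pa; have [n _ na] := enA_onto Pa; subst a.
have /mapP [[x b] xb /= ->] := extend_forth_fst (matching_seq n) Pa.
by exists b, n.+1; apply: extend_back_sub.
Qed.

Lemma matched_onto b : PB b -> exists a, matched a b.
Proof.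
move=> Pb; have [n _ nb] := enB_onto Pb; subst b.
have /mapP [[a y] ay /= ->] := extend_back_snd (extend_forth n (matching_seq n)) Pb.
by exists a, n.+1.
Qed.

Lemma matched_bijection : exists (f : A -> B) (g : B -> A),
  (forall a, PA a -> [/\ PB (f a), g (f a) = a & G a (f a)]) /\
  (forall b, PB b -> [/\ PA (g b), f (g b) = b & G (g b) b]).
Proof.
have /choice [f fP] : forall a, exists b, PA a -> matched a b.
  move=> a; have [/matched_total [b ab]|nP] := pselect (PA a); first by exists b.
  by exists (enB 0) => /nP.
have /choice [g gP] : forall b, exists a, PB b -> matched a b.
  move=> b; have [/matched_onto [a ab]|nP] := pselect (PB b); first by exists a.
  by exists (enA 0) => /nP.
exists f, g; split=> [a /fP afa|b /gP gbb].
- have [_ Pfa Gafa] := matchedP afa; split=> //.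
  exact: matched_inj (gP _ Pfa) afa.
- have [Pgb _ Ggbb] := matchedP gbb; split=> //.
  exact: matched_fun (fP _ Pgb) gbb.
Qed.

End BackAndForth.

Lemma back_and_forth (A B : eqType) (PA : set A) (PB : set B) (G : A -> B -> Prop) :
  (exists enA : nat -> A, PA `<=` range enA) -> (exists enB : nat -> B, PB `<=` range enB) ->
  (forall a (s : seq B), PA a -> exists b, [/\ PB b, b \notin s & G a b]) ->
  (forall b (s : seq A), PB b -> exists a, [/\ PA a, a \notin s & G a b]) ->
  exists (f : A -> B) (g : B -> A),
    (forall a, PA a -> [/\ PB (f a), g (f a) = a & G a (f a)]) /\
    (forall b, PB b -> [/\ PA (g b), f (g b) = b & G (g b) b]).
Proof.
move=> [enA enAP] [enB enBP] forthE backE.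
have /choice [fo foP] : forall x : A * seq B,
    exists b, PA x.1 -> [/\ PB b, b \notin x.2 & G x.1 b].
  move=> [a s]; have [/(forthE a s) [b ?]|nP] := pselect (PA a); first by exists b.
  by exists (enB 0) => /nP.
have /choice [ba baP] : forall x : B * seq A,
    exists a, PB x.1 -> [/\ PA a, a \notin x.2 & G a x.1].
  move=> [b s]; have [/(backE b s) [a ?]|nP] := pselect (PB b); first by exists a.
  by exists (enA 0) => /nP.
exact: (matched_bijection enAP enBP (fun a s => foP (a, s)) (fun b s => baP (b, s))).
Qed.

Definition compatible {R : realType} (X K1 K2 : metricType R) (e1 : X -> K1) (e2 : X -> K2)
  (r1 : K1 -> X) (r2 : K2 -> X) (p : K1) (q : K2) :=
  mdist (r1 p) (r2 q) < Num.max (mdist p (e1 (r1 p))) (mdist q (e2 (r2 q))).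

Lemma compatibleC {R : realType} (X K1 K2 : metricType R) (e1 : X -> K1) (e2 : X -> K2)
  (r1 : K1 -> X) (r2 : K2 -> X) p q :
  compatible e1 e2 r1 r2 p q = compatible e2 e1 r2 r1 q p.
Proof. by rewrite /compatible metric_sym maxC. Qed.

Section Compatible.
Context {R : realType} (X K1 K2 : metricType R) (e1 : X -> K1) (e2 : X -> K2).
Hypotheses (pe1 : peripheral_extension e1) (pe2 : peripheral_extension e2).
Variables (r1 : K1 -> X) (r2 : K2 -> X).
Hypothesis r1P : forall p z, mdist p (e1 (r1 p)) <= mdist p (e1 z).
Hypothesis r2P : forall q z, mdist q (e2 (r2 q)) <= mdist q (e2 z).
Local Notation compatible := (compatible e1 e2 r1 r2).

Lemma compatible_forth p (s : seq K2) : ~ range e1 p ->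
  exists q, [/\ ~ range e2 q, q \notin s & compatible p q].
Proof.
move=> Pp; set x := r1 p; set d := mdist p (e1 x).
have d0 : 0 < d by rewrite mdist_gt0; apply/eqP => px; apply: Pp; exists x.
have [b b0 bP] := embedding_mdist_inv (peripheral_embedding pe2) x d0.
have [q [Pq /negP qs xq]] : exists q, [/\ ~ range e2 q, ~ [set` s] q &
    mdist (e2 x) q < Num.min d (b / 2)].
  by apply: peripheral_dense_avoid => //; rewrite lt_min d0 divr_gt0.
exists q; split => //; move: xq; rewrite lt_min => /andP [xqd xqb].
have : mdist (e2 x) (e2 (r2 q)) < b.
  by have := mdist_nearest_le r2P x q; rewrite mulr2n; lra.
by move=> /bP xr2q; rewrite /compatible lt_max xr2q.
Qed.

Lemma compatible_continuous (h : K1 -> K2) (g : K2 -> K1) :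
  (forall x, h (e1 x) = e2 x) -> (forall y, ~ range e1 y -> compatible y (h y)) ->
  cancel h g -> continuous h.
Proof.
move=> he hcomp hK; apply/continuous_mdistP => y0 eps eps0.
have [[x _ <-]|Py0] := pselect (range e1 y0); last first.
  have [r r0 rP] := peripheral_isolated pe1 Py0.
  by exists r => // y /rP ->; rewrite mdistxx.
have [emb1 emb2] := (peripheral_embedding pe1, peripheral_embedding pe2).
have [a a0 aP] : exists2 a : R, 0 < a &
    forall z, mdist x z < a -> mdist (e2 x) (e2 z) < eps / 2.
  by apply: (proj1 (continuous_mdistP _) emb2.1); rewrite divr_gt0.
have [b b0 bP] : exists2 b : R, 0 < b &
    forall z, mdist (e1 x) (e1 z) < b -> mdist x z < a / 2.
  by apply: embedding_mdist_inv; rewrite ?divr_gt0.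
set gam := Num.min (eps / 2) (a / 2).
have gam0 : 0 < gam by rewrite lt_min !divr_gt0.
have [gam_eps gam_a] : gam <= eps / 2 /\ gam <= a / 2 by rewrite !ge_min !lexx orbT.
have far_finite : finite_set [set y | ~ range e1 y /\ forall z, gam <= mdist (h y) (e2 z)].
  apply: sub_finite_set (finite_image g (peripheral_far_finite pe2 gam0)) => y [_ far].
  by exists (h y); rewrite /= ?hK.
have [n n0 nP] : exists2 n : R, 0 < n & forall y, mdist (e1 x) y < n ->
    ~ (~ range e1 y /\ forall z, gam <= mdist (h y) (e2 z)).
  by apply: finite_set_mdist_avoid far_finite _ => -[[]]; exists x.
exists (Num.min (b / 2) (Num.min n (a / 2))); first by rewrite !lt_min !divr_gt0 // n0.
move=> y; rewrite !lt_min he => /andP [yb /andP [yn ya]].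
have [[z _ zy]|Py] := pselect (range e1 y).
  subst y; have /bP xz : mdist (e1 x) (e1 z) < b by lra.
  by rewrite he; apply: lt_trans (aP z _) _; lra.
have /existsNP [z /negP] : ~ forall z, gam <= mdist (h y) (e2 z) by move=> far; apply: (nP y).
rewrite -ltNge => hyz.
have xr1y : mdist x (r1 y) < a / 2.
  by apply: bP; have := mdist_nearest_le r1P x y; rewrite mulr2n; lra.
have hy_gam : mdist (h y) (e2 (r2 (h y))) < gam by have := r2P (h y) z; lra.
have r1r2 : mdist (r1 y) (r2 (h y)) < a / 2.
  apply: lt_le_trans (hcomp y Py) _; rewrite ge_max; apply/andP; split.
    by have := r1P y x; rewrite (metric_sym y (e1 x)); lra.
  by rewrite ltW // (lt_le_trans hy_gam).
have /aP : mdist x (r2 (h y)) < a by have := metric_triangle x (r1 y) (r2 (h y)); lra.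
have := metric_triangle (e2 x) (e2 (r2 (h y))) (h y).
by rewrite (metric_sym (e2 (r2 (h y)))); lra.
Qed.

End Compatible.

Lemma peripheral_extension_unique {R : realType} (X : metricType R) :
  compact [set: X] -> [set: X] !=set0 ->
  forall (K1 K2 : metricType R) (e1 : X -> K1) (e2 : X -> K2),
  peripheral_extension e1 -> peripheral_extension e2 ->
  exists h : K1 -> K2, homeomorphism h /\ forall x, h (e1 x) = e2 x.
Proof.
move=> cX X0 K1 K2 e1 e2 pe1 pe2.
have [r1 r1P] := exists_nearest_point (peripheral_embedding pe1).1 cX X0.
have [r2 r2P] := exists_nearest_point (peripheral_embedding pe2).1 cX X0.
have back q (s : seq K1) : ~ range e2 q ->
    exists p, [/\ ~ range e1 p, p \notin s & compatible e1 e2 r1 r2 p q].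
  by move=> /(compatible_forth pe1 r2 r1P s) [p [Pp ps pq]]; exists p; rewrite compatibleC.
have [f [g [fP gP]]] := back_and_forth (peripheral_enum pe1) (peripheral_enum pe2)
  (fun p s => compatible_forth pe2 r1 r2P s) back.
have [h [he hf]] := glue_off_range e2 f (peripheral_embedding pe1).2.1.
have [k [ke kg]] := glue_off_range e1 g (peripheral_embedding pe2).2.1.
have hK : cancel h k.
  move=> y; have [[x _ <-]|Py] := pselect (range e1 y); first by rewrite he ke.
  by have [Pfy gfy _] := fP y Py; rewrite hf // kg.
have kK : cancel k h.
  move=> y; have [[x _ <-]|Py] := pselect (range e2 y); first by rewrite ke he.
  by have [Pgy fgy _] := gP y Py; rewrite kg // hf.
have hcomp y : ~ range e1 y -> compatible e1 e2 r1 r2 y (h y).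
  by move=> Py; rewrite hf //; case: (fP y Py).
have kcomp y : ~ range e2 y -> compatible e2 e1 r2 r1 y (k y).
  by move=> Py; rewrite kg // -compatibleC; case: (gP y Py).
exists h; split; last exact: he.
split; first exact (compatible_continuous pe1 pe2 r1P r2P he hcomp hK).
exists k; do 2!split=> //.
exact (compatible_continuous pe2 pe1 r2P r1P ke kcomp kK).
Qed.

Lemma compact_dense_seq {R : realType} (X : metricType R) :
  compact [set: X] -> [set: X] !=set0 ->
  exists y : nat -> X, forall x (eps : R), 0 < eps -> exists k, mdist x (y k) < eps.
Proof.
move=> /compact_cover_compact cX [x0 _].
have /choice [s sP] : forall N : nat, exists s : seq X, forall z,
    exists2 c, c \in s & mdist c z < N.+1%:R^-1.
  move=> N; have [|z _|D _ DX] := cX X [set: X] (fun c => [set z | mdist c z < N.+1%:R^-1]).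
  - by move=> c _; apply: open_mdist_ball.
  - by exists z => //=; rewrite mdistxx.
  by exists (finmap.enum_fset D) => z; have [c /= cD zc] := DX z I; exists c.
exists (fun n => if choice.unpickle n is Some (N, j) then nth x0 (s N) j else x0).
move=> x eps eps0; have [N] := ltr_add_invr eps0; rewrite add0r => Neps.
have [c cs cx] := sP N x; exists (choice.pickle (N, index c (s N))).
by rewrite choice.pickleK nth_index // metric_sym (lt_trans cx).
Qed.

(* [y] does not occur in the type: it only makes the metric below, which
   depends on [y], a canonical instance of [peripheral_space y]. *)
Definition peripheral_space {R : realType} (X : metricType R) (y : nat -> X) : Type :=
  (X + nat * nat)%type.

HB.instance Definition _ {R : realType} (X : metricType R) (y : nat -> X) :=
  Choice.copy (peripheral_space y) (X + nat * nat)%type.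

Section PeripheralSpace.
Context {R : realType} (X : metricType R) (y : nat -> X).
Local Notation K := (peripheral_space y).
Implicit Types a b c : K.

Definition base a : X := match a with inl x => x | inr km => y km.1 end.

Definition height a : R := if a is inr km then (km.1 + km.2).+1%:R^-1 else 0.

Definition peripheral_dist a b : R :=
  if a == b then 0 else mdist (base a) (base b) + height a + height b.

Lemma height_ge0 a : 0 <= height a.
Proof. by case: a => [x|km] //=; rewrite invr_ge0 ler0n. Qed.

Lemma height_inr_gt0 km : 0 < height (inr km).
Proof. by rewrite /= invr_gt0 ltr0n. Qed.

Lemma peripheral_dist_xx a : peripheral_dist a a = 0.
Proof. by rewrite /peripheral_dist eqxx. Qed.

Lemma peripheral_dist_eq0 a b : peripheral_dist a b = 0 -> a = b.
Proof.
rewrite /peripheral_dist; case: (eqVneq a b) => [//|ab] d0; exfalso.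
have := mdist_ge0 (base a) (base b); have := height_ge0 a; have := height_ge0 b.
case: a b ab d0 => [x|km] [x'|km'] ab d0 *.
- have /mdist_positivity xx' : mdist x x' = 0 by move: d0 => /=; lra.
  by move: ab; rewrite xx' eqxx.
- by have := height_inr_gt0 km'; lra.
- by have := height_inr_gt0 km; lra.
- by have := height_inr_gt0 km; lra.
Qed.

Lemma peripheral_distC a b : peripheral_dist a b = peripheral_dist b a.
Proof. by rewrite /peripheral_dist eq_sym; case: ifP => // _; rewrite metric_sym; lra. Qed.

Lemma peripheral_dist_triangle b a c :
  peripheral_dist a c <= peripheral_dist a b + peripheral_dist b c.
Proof.
rewrite /peripheral_dist; case: (eqVneq a c) => [->|ac].
  by case: ifP => _; case: ifP => _; rewrite ?addr0 ?add0r ?addr_ge0 ?mdist_ge0 ?height_ge0.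
case: (eqVneq a b) => [<-|ab]; first by rewrite ?eqxx ?(negbTE ac) add0r.
case: (eqVneq b c) => [->|bc]; first by rewrite ?eqxx ?(negbTE ac) addr0.
by have := metric_triangle (base a) (base b) (base c); have := height_ge0 b; lra.
Qed.

HB.instance Definition _ := isMetric.Build R K
  peripheral_dist_xx peripheral_dist_eq0 peripheral_distC peripheral_dist_triangle.

Lemma mdistE a b : mdist a b = peripheral_dist a b.
Proof. by []. Qed.

Lemma mdist_base_le a b : mdist (base a) (base b) <= mdist a b.
Proof.
rewrite mdistE /peripheral_dist; case: (eqVneq a b) => [->|_]; first by rewrite mdistxx.
by have := height_ge0 a; have := height_ge0 b; lra.
Qed.

Lemma mdist_le_base a b : mdist a b <= mdist (base a) (base b) + height a + height b.
Proof.
rewrite mdistE /peripheral_dist; case: ifP => // _.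
by rewrite !addr_ge0 ?mdist_ge0 ?height_ge0.
Qed.

Lemma mdist_inl x x' : mdist (inl x : K) (inl x') = mdist x x'.
Proof.
rewrite mdistE /peripheral_dist; case: (eqVneq (inl x : K) (inl x')) => [[->]|_] /=.
  by rewrite mdistxx.
by rewrite !addr0.
Qed.

Lemma mdist_inr_lt km b : mdist (inr km : K) b < height (inr km) -> b = inr km.
Proof.
rewrite mdistE /peripheral_dist; case: (eqVneq (inr km : K) b) => [//|_] lt; exfalso.
by have := height_ge0 b; have := mdist_ge0 (base (inr km)) (base b); lra.
Qed.

Lemma base_continuous : continuous base.
Proof.
apply/continuous_mdistP => a eps eps0; exists eps => // b ab.
exact: le_lt_trans (mdist_base_le a b) ab.
Qed.

Lemma inl_continuous : continuous (inl : X -> K).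
Proof. by apply/continuous_mdistP => x eps eps0; exists eps => // x'; rewrite mdist_inl. Qed.

Lemma range_inlC : ~` range (inl : X -> K) = range inr.
Proof.
apply/seteqP; split=> [[x /(_ (ex_intro2 _ _ x I erefl)) //|km _]|_ [km _ <-] [x _ //]].
by exists km.
Qed.

Lemma finite_height_ge (eps : R) : 0 < eps -> finite_set [set a | eps <= height a].
Proof.
move=> eps0; have [N] := ltr_add_invr eps0; rewrite add0r => Neps.
apply: sub_finite_set (finite_image inr (finite_setX (finite_II N.+1) (finite_II N.+1))).
case=> [x /= epsx|[k m] /= epsh]; first by have := lt_le_trans eps0 epsx; rewrite ltxx.
exists (k, m) => //; have : N.+1%:R^-1 < (k + m).+1%:R^-1 :> R by apply: lt_le_trans epsh.
by rewrite ltf_pV2 ?posrE ?ltr0n // ltr_nat ltnS => km; split => /=; rewrite /= ?mksetE; lia.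
Qed.

End PeripheralSpace.

Section PeripheralSpaceExtension.
Context {R : realType} (X : metricType R) (y : nat -> X).
Hypothesis hX : compact [set: X].
Hypothesis y_dense : forall x (eps : R), 0 < eps -> exists k, mdist x (y k) < eps.
Local Notation K := (peripheral_space y).
Local Notation base := (@base _ X y).
Local Notation height := (@height _ X y).

Lemma cluster_low_filter (F : set_system K) : ProperFilter F ->
  (forall eps : R, 0 < eps -> F [set a | height a < eps]) -> exists x, cluster F (inl x).
Proof.
move=> PF low; have [x [_ cx]] := hX (fmap_proper_filter base PF) filterT.
exists x => A B FA /nbhs_mdistP [eps eps0 epsB].
have e20 : 0 < eps / 2 by rewrite divr_gt0.
have FAlow : F (A `&` [set a | height a < eps / 2]) by apply: filterI => //; apply: low.
have Fbase : F (base @^-1` (base @` (A `&` [set a | height a < eps / 2]))).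
  by apply: filterS FAlow => a Aa; exists a.
have xball : nbhs x [set z | mdist x z < eps / 2] by apply/nbhs_mdistP; exists (eps / 2).
have [_ [[a [Aa ha] <-] /= xa]] := cx _ _ Fbase xball.
exists a; split => //; apply: epsB.
by have := mdist_le_base (inl x) a; move: ha; rewrite /= addr0; lra.
Qed.

Lemma peripheral_space_compact : compact [set: K].
Proof.
move=> F PF _.
have [low|/existsNP [eps /not_implyP [eps0 nlow]]] :=
  pselect (forall eps : R, 0 < eps -> F [set a | height a < eps]).
  by have [x cx] := cluster_low_filter PF low; exists (inl x).
set T := [set a : K | eps <= height a].
have FT A : F A -> A `&` T !=set0.
  move=> FA; apply: contra_notP nlow => AT0; apply: filterS FA => a Aa.
  by rewrite /= ltNge; apply/negP => Ta; apply: AT0; exists a.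
have PG : ProperFilter (within T F).
  by apply: Build_ProperFilter_ex => A /FT [a [TA Ta]]; exists a; apply: TA.
have GT : within T F T by apply: filterS (fun a _ Ta => Ta) filterT.
have [t [_ ct]] := finite_compact (finite_height_ge y eps0) PG GT.
by exists t; split => // A B FA /ct; apply; apply: filterS FA => a Aa _.
Qed.

Lemma inl_embedding : embedding (inl : X -> K).
Proof.
split; first exact: inl_continuous.
split; first by move=> x x' [].
move=> U oU; exists (base @^-1` U); split.
  exact: (proj1 (continuousP _) (@base_continuous _ X y) U oU).
apply/seteqP; split=> [_ [x Ux <-]|b [Ub [x _ xb]]]; first by split=> //; exists x.
by subst b; exists x.
Qed.

Lemma open_range_inr : open (range (inr : nat * nat -> K)).
Proof.
apply/open_mdistP => _ [km _ <-]; exists (height (inr km)); first exact: height_inr_gt0.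
by move=> b /mdist_inr_lt ->; exists km.
Qed.

Lemma dense_range_inr : closure (range (inr : nat * nat -> K)) = [set: K].
Proof.
apply/seteqP; split => // -[x|km] _; last by apply: subset_closure; exists km.
move=> B /nbhs_mdistP [eps eps0 epsB].
have e20 : 0 < eps / 2 by rewrite divr_gt0.
have [k xk] := y_dense x e20; have [N] := ltr_add_invr e20; rewrite add0r => Neps.
exists (inr (k, N)); split; first by exists (k, N).
have kN : (k + N).+1%:R^-1 < eps / 2 :> R.
  by apply: le_lt_trans Neps; rewrite lef_pV2 ?posrE ?ltr0n // ler_nat ltnS leq_addl.
apply/epsB/(le_lt_trans (mdist_le_base _ _)).
by rewrite /= addr0 [eps]splitr ltrD.
Qed.

Lemma isolated_range_inr km : isolated (range (inr : nat * nat -> K)) (inr km).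
Proof.
split; first by apply/mem_set; exists km.
exists [set b | mdist (inr km : K) b < height (inr km)].
  by apply/nbhs_mdistP; exists (height (inr km)) => //; exact: height_inr_gt0.
apply/seteqP; split=> [b [/mdist_inr_lt -> //]|_ ->]; split; last by exists km.
by rewrite mksetE mdistxx; exact: height_inr_gt0.
Qed.

Lemma peripheral_space_extension : peripheral_extension (inl : X -> K).
Proof.
rewrite /peripheral_extension range_inlC.
split; first exact: peripheral_space_compact.
split; first exact: inl_embedding.
split; first exact: open_range_inr.
split; first exact: dense_range_inr.
split; first exact: sub_countable (card_image_le _ _) (countableP _).
split; last by move=> _ [km _ <-]; exact: isolated_range_inr.
have inr_inj : injective (inr : nat * nat -> K) by move=> ? ? [].
by rewrite (eq_finite_set (inj_card_eq (in2W inr_inj))); exact: infinite_prod_nat.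
Qed.

End PeripheralSpaceExtension.

Theorem lemma1p1 (R : realType) (X : metricType R) (hX : compact [set: X]) :
  ([set: X] !=set0 -> exists (K : metricType R) (e : X -> K), peripheral_extension e) /\
  ([set: X] !=set0 -> forall (K1 K2 : metricType R) (e1 : X -> K1) (e2 : X -> K2),
      peripheral_extension e1 -> peripheral_extension e2 ->
      exists h : K1 -> K2, homeomorphism h /\ forall x, h (e1 x) = e2 x) /\
  (forall (K : metricType R) (e : X -> K), peripheral_extension e ->
      forall p q : K, ~ range e p -> ~ range e q ->
      exists h : K -> K, [/\ homeomorphism h, forall x, h (e x) = e x & h p = q]).
Proof.
split.
  move=> X0; have [y y_dense] := compact_dense_seq hX X0.
  by exists (peripheral_space y), inl; exact: peripheral_space_extension.
split; first exact: peripheral_extension_unique.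
move=> K e pe p q Pp Pq; exists (swap p q); split; last exact: swapl.
  exact: swap_homeomorphism (peripheral_isolated pe Pp) (peripheral_isolated pe Pq).
by move=> x; apply: swap_other; apply/eqP => ex; [apply: Pp|apply: Pq]; exists x.
Qed.
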